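(* Assume Schinzel's Hypothesis H. Then $j(a_n)>1$ for infinitely many $n$; equivalently, there are infinitely many $n\ge 2$ such that $a_n-a_{n-1}\notin A$.
   Context: Let $A$ be the set of positive integers $a$ such that $a^2+1$ is prime, and enumerate it in increasing order as $A=\{a_1<a_2<a_3<\cdots\}$ (so $a_1=1,a_2=2,a_3=4,\dots$). For $n\ge 2$, $j(a_n)$ denotes the smallest index $i$ with $1\le i\le n-1$ such that $a_n-a_{n-i}\in A$ (i.e. $a_n-a_{n-i}=a_k$ for some $k$). A finite set of polynomials $f_1,\dots,f_r\in\mathbb{Z}[x]$ satisfies the Bunyakovsky condition if there is no prime $p$ such that $\prod_i f_i(a)\equiv 0 \pmod p$ for all $a\in\mathbb{F}_p$. Schinzel's Hypothesis H: if $f_1,\dots,f_r\in\mathbb{Z}[x]$ are irreducible polynomials with positive leading coefficients satisfying the Bunyakovsky condition, then there are infinitely many positive integers $x$ for which $f_1(x),\dots,f_r(x)$ are all prime. *)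

From mathcomp Require Import all_boot all_order all_algebra.
Set Implicit Arguments. Unset Strict Implicit. Unset Printing Implicit Defensive.
Import Order.TTheory GRing.Theory Num.Theory.
Local Open Scope ring_scope.

Definition inA (a : nat) : bool := (0 < a)%N && prime (a ^ 2 + 1).

Definition countA (x : nat) : nat := count inA (iota 1 x).

(* nthA n x  <->  x = a_n, the n-th element (1-indexed) of A in increasing order. *)
Definition nthA (n x : nat) : Prop := inA x /\ countA x = n.

Definition primez (z : int) : Prop := exists p : nat, prime p /\ z = p%:Z.

Definition irreducibleZ (f : {poly int}) : Prop :=
  f != 0 /\ f \isn't a GRing.unit /\
  forall g h : {poly int}, f = g * h -> g \is a GRing.unit \/ h \is a GRing.unit.

(* Bunyakovsky condition: no prime p with p | prod_i f_i(a) for every a in F_p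
   (a ranging over the representatives 0..p-1). *)
Definition bunyakovsky (fs : seq {poly int}) : Prop :=
  ~ exists p : nat, prime p /\
      forall a : nat, (a < p)%N -> (p%:Z %| \prod_(f <- fs) f.[a%:Z])%Z.

Definition SchinzelH : Prop :=
  forall fs : seq {poly int},
    (forall f, f \in fs -> irreducibleZ f) ->
    (forall f, f \in fs -> 0 < lead_coef f) ->
    bunyakovsky fs ->
    forall N : nat, exists x : nat, (N < x)%N /\ forall f, f \in fs -> primez f.[x%:Z].

(* Under Hypothesis H, (130 t + 66)^2 + 1 and (130 t + 74)^2 + 1 are prime
   for infinitely many t: both are irreducible quadratics with negative
   discriminant, and their values at t = 0 and t = 1 are coprime, which rules
   out a fixed prime divisor.  For such t, x = 130 t + 66 and x + 8 lie in A
   while x + 1, ..., x + 7 do not, because (x + k)^2 + 1 is divisible by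
   2, 5, 2, 13, 2, 5, 2 respectively (all divisors of 130).  So x and x + 8 are
   consecutive elements of A, and their difference is not in A as
   8^2 + 1 = 65 = 5 * 13.  These pairs occur with arbitrarily large index. *)

From mathcomp Require Import all_boot all_order all_algebra.
From mathcomp Require Import zify ring lra.
Set Implicit Arguments. Unset Strict Implicit. Unset Printing Implicit Defensive.
Import Order.TTheory GRing.Theory Num.Theory.
Local Open Scope ring_scope.

Lemma absz_eq1_unit (c : int) : `|c|%N = 1%N -> c \is a GRing.unit.
Proof. by case: c => [[|[]]|[]]. Qed.

Lemma polyC_factor_unit (f g h : {poly int}) i j :
  f = g * h -> size g = 1%N -> coprime `|f`_i| `|f`_j| -> g \is a GRing.unit.
Proof.
move=> fE g1; rewrite poly_unitE g1 /=.
have {}fE : f = (g`_0)%:P * h by rewrite fE -size1_polyC ?g1.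
rewrite fE !coefCM !abszM /coprime => /eqP co; apply: absz_eq1_unit.
apply/eqP; rewrite -dvdn1 -co dvdn_gcd.
by apply/andP; split; apply: dvdn_mulr.
Qed.

Lemma coef_linear_mul (R : comNzRingType) (g h : {poly R}) :
  size g = 2%N -> size h = 2%N ->
  [/\ (g * h)`_0 = g`_0 * h`_0, (g * h)`_1 = g`_0 * h`_1 + g`_1 * h`_0
    & (g * h)`_2 = g`_1 * h`_1].
Proof.
move=> g2 h2; have g2z : g`_2 = 0 by rewrite nth_default ?g2.
have h2z : h`_2 = 0 by rewrite nth_default ?h2.
rewrite !coefM !big_ord_recr !big_ord0 /= g2z h2z mul0r mulr0 !add0r addr0.
by split.
Qed.

Lemma linear_mul_discr_ge0 (R : realDomainType) (g h : {poly R}) :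
  size g = 2%N -> size h = 2%N ->
  4 * (g * h)`_0 * (g * h)`_2 <= (g * h)`_1 ^+ 2.
Proof.
move=> g2 h2; have [-> -> ->] := coef_linear_mul g2 h2.
rewrite -subr_ge0.
have -> : (g`_0 * h`_1 + g`_1 * h`_0) ^+ 2 - 4 * (g`_0 * h`_0) * (g`_1 * h`_1)
  = (g`_0 * h`_1 - g`_1 * h`_0) ^+ 2 by ring.
exact: sqr_ge0.
Qed.

Lemma quadratic_irreducibleZ (f : {poly int}) :
  size f = 3%N -> f`_1 ^+ 2 < 4 * f`_0 * f`_2 -> coprime `|f`_0| `|f`_2| ->
  irreducibleZ f.
Proof.
move=> f3 discr co; have f0 : f != 0 by rewrite -size_poly_eq0 f3.
split=> //; split; first by rewrite poly_unitE f3.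
move=> g h fE.
have g0 : g != 0 by apply: contraNneq f0; rewrite fE => ->; rewrite mul0r.
have h0 : h != 0 by apply: contraNneq f0; rewrite fE => ->; rewrite mulr0.
have sgh : ((size g + size h).-1 = 3)%N by rewrite -size_mul // -fE.
have gp : (0 < size g)%N by rewrite size_poly_gt0.
have hp : (0 < size h)%N by rewrite size_poly_gt0.
have [g1|g_ne1] := eqVneq (size g) 1%N.
  by left; exact: polyC_factor_unit fE g1 co.
have [h1|h_ne1] := eqVneq (size h) 1%N.
  by right; apply: (polyC_factor_unit _ h1 co); rewrite fE mulrC.
have [g2 h2] : size g = 2%N /\ size h = 2%N.
  by lia.
by move: discr; rewrite fE ltNge linear_mul_discr_ge0.
Qed.

Definition sqr_affine_add1 (a b : int) : {poly int} :=
  Poly [:: b ^+ 2 + 1; 2 * a * b; a ^+ 2].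

Section SqrAffineAdd1.
Variables a b : int.
Hypothesis a_neq0 : a != 0.

Lemma horner_sqr_affine_add1 x : (sqr_affine_add1 a b).[x] = (a * x + b) ^+ 2 + 1.
Proof. by rewrite horner_Poly /=; ring. Qed.

Lemma size_sqr_affine_add1 : size (sqr_affine_add1 a b) = 3%N.
Proof. by rewrite (@PolyK _ 0) //= sqrf_eq0. Qed.

Lemma lead_coef_sqr_affine_add1 : 0 < lead_coef (sqr_affine_add1 a b).
Proof.
by rewrite lead_coefE size_sqr_affine_add1 coef_Poly /= exprn_even_gt0.
Qed.

Lemma sqr_affine_add1_irreducible :
  coprime `|a| `|b ^+ 2 + 1| -> irreducibleZ (sqr_affine_add1 a b).
Proof.
move=> co; apply: quadratic_irreducibleZ;
  rewrite ?size_sqr_affine_add1 ?coef_Poly //=.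
  have a2 : 0 < a ^+ 2 by rewrite exprn_even_gt0.
  nra.
by rewrite abszX coprime_sym coprimeXl.
Qed.

End SqrAffineAdd1.

Lemma horner_sqr_affine_add1_nat (a b t : nat) :
  (sqr_affine_add1 a b).[t%:Z] = ((a * t + b) ^ 2 + 1)%N%:Z.
Proof. rewrite horner_sqr_affine_add1; lia. Qed.

Lemma bunyakovsky_coprime01 (fs : seq {poly int}) :
  coprime `|\prod_(f <- fs) f.[0]| `|\prod_(f <- fs) f.[1]| -> bunyakovsky fs.
Proof.
move=> co [p [p_pr dvd_p]]; have p_gt1 := prime_gt1 p_pr.
move: co (dvd_p 0%N (ltnW p_gt1)) (dvd_p 1%N p_gt1).
set u := \prod_(f <- fs) _; set v := \prod_(f <- fs) _.
rewrite !dvdzE /= => /eqP co p_u p_v.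
have : (p %| gcdn `|u| `|v|)%N by rewrite dvdn_gcd p_u.
by rewrite co dvdn1 => /eqP p1; rewrite p1 in p_gt1.
Qed.

Lemma primez_nat (n : nat) : primez n%:Z -> prime n.
Proof. by case=> p [p_pr [->]]. Qed.

Lemma SchinzelH_inA_pair (a b c : nat) : SchinzelH -> (0 < a)%N ->
  coprime a (b ^ 2 + 1) -> coprime a (c ^ 2 + 1) ->
  coprime ((b ^ 2 + 1) * (c ^ 2 + 1)) (((a + b) ^ 2 + 1) * ((a + c) ^ 2 + 1)) ->
  forall M, exists t, (M < t)%N /\ inA (a * t + b) /\ inA (a * t + c).
Proof.
move=> schinzel a_gt0 co_b co_c co01 M.
set F := sqr_affine_add1 a b; set G := sqr_affine_add1 a c.
have a_neq0 : a%:Z != 0 by rewrite eqz_nat -lt0n.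
have coprime_int d : coprime a (d ^ 2 + 1) -> coprime `|a%:Z| `|d%:Z ^+ 2 + 1|.
  by have -> : (`|(d%:Z ^+ 2 + 1)%R| = d ^ 2 + 1)%N by lia.
have irr_FG f : f \in [:: F; G] -> irreducibleZ f.
  by rewrite !inE => /orP[] /eqP ->; apply: sqr_affine_add1_irreducible => //;
    apply: coprime_int.
have lc_FG f : f \in [:: F; G] -> 0 < lead_coef f.
  by rewrite !inE => /orP[] /eqP ->; apply: lead_coef_sqr_affine_add1.
have bun_FG : bunyakovsky [:: F; G].
  apply: bunyakovsky_coprime01; rewrite !big_cons !big_nil !mulr1.
  have -> : F.[0] * G.[0] = ((b ^ 2 + 1) * (c ^ 2 + 1))%N%:Z.
    by rewrite !horner_sqr_affine_add1; lia.
  have -> : F.[1] * G.[1] = (((a + b) ^ 2 + 1) * ((a + c) ^ 2 + 1))%N%:Z.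
    by rewrite !horner_sqr_affine_add1; lia.
  by rewrite !absz_nat.
have [t [Mt prime_FG]] := schinzel _ irr_FG lc_FG bun_FG M.
have inA_val (d : nat) : primez (sqr_affine_add1 a d).[t%:Z] -> inA (a * t + d).
  rewrite horner_sqr_affine_add1_nat /inA => /primez_nat ->; rewrite andbT.
  by rewrite ltn_addr // muln_gt0 a_gt0 (leq_ltn_trans _ Mt).
exists t; split=> //; split; apply: inA_val; apply: prime_FG;
  by rewrite !inE eqxx ?orbT.
Qed.

Local Open Scope nat_scope.

Lemma not_inA_of_dvd p x : 1 < p -> p %| x ^ 2 + 1 -> p < x ^ 2 + 1 -> ~~ inA x.
Proof.
move=> p_gt1 p_dvd p_lt; apply/nandP; right; apply/negP => x_pr.
have p_ne1 : p != 1 by rewrite neq_ltn p_gt1 orbT.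
by move: p_dvd => /(prime_nt_dvdP x_pr p_ne1) p_eq; rewrite p_eq ltnn in p_lt.
Qed.

Lemma dvdn_sqr_affine_add1 p d t r :
  p %| d -> (p %| (d * t + r) ^ 2 + 1) = (p %| r ^ 2 + 1).
Proof.
move=> p_d.
have -> : (d * t + r) ^ 2 + 1 = d * (t * (d * t + 2 * r)) + (r ^ 2 + 1) by ring.
by rewrite dvdn_addr // dvdn_mulr.
Qed.

Lemma not_inA_130_66_gap t k : 0 < k < 8 -> ~~ inA (130 * t + 66 + k).
Proof.
move=> /andP[k_gt0 k_lt8]; rewrite -addnA.
have [p [p_gt1 p_le13 p_130 p_dvd]] :
    exists p, [/\ 1 < p, p <= 13, p %| 130 & p %| (66 + k) ^ 2 + 1].
  by case: k k_gt0 k_lt8 => [|[|[|[|[|[|[|[|k]]]]]]]] //= _ _;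
    [exists 2 | exists 5 | exists 2 | exists 13 | exists 2 | exists 5 | exists 2].
apply: (not_inA_of_dvd p_gt1); first by rewrite dvdn_sqr_affine_add1.
by apply: leq_ltn_trans p_le13 _; nia.
Qed.

Lemma countA_addn x k : countA (x + k) = countA x + count inA (iota x.+1 k).
Proof. by rewrite /countA iotaD count_cat add1n. Qed.

Lemma countA_ltn x y : inA y -> x < y -> countA x < countA y.
Proof.
move=> y_A xy.
rewrite -(subnKC (ltnW xy)) countA_addn -[X in X < _]addn0 ltn_add2l.
by rewrite -has_count; apply/hasP; exists y; rewrite // mem_iota; lia.
Qed.

Lemma countA_next x d : 0 < d -> (forall k, 0 < k < d -> ~~ inA (x + k)) ->
  inA (x + d) -> countA (x + d) = (countA x).+1.
Proof.
case: d => // d _ gap xd_A; rewrite countA_addn -[d.+1]addn1 iotaD count_cat /=.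
have -> : count inA (iota x.+1 d) = 0.
  apply/eqP; rewrite eqn0Ngt -has_count; apply/hasPn => y.
  rewrite mem_iota => /andP[xy yd].
  by rewrite -(subnKC (ltnW xy)) gap //; lia.
by move: xd_A; rewrite -addSnnS => ->; rewrite addn1.
Qed.

Lemma nthA_consecutive x d :
  inA x -> 0 < d -> (forall k, 0 < k < d -> ~~ inA (x + k)) -> inA (x + d) ->
  nthA (countA x).+1 (x + d) /\ nthA (countA x) x.
Proof. by move=> x_A d_gt0 gap xd_A; rewrite /nthA countA_next. Qed.

Lemma countA_unbounded (P : nat -> Prop) :
  (forall M, exists x, M < x /\ P x) -> (forall x, P x -> inA x) ->
  forall N, exists x, P x /\ N <= countA x.
Proof.
move=> P_unbounded P_A; elim=> [|N [x0 [_ N_le]]].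
  by have [x [_ Px]] := P_unbounded 0; exists x.
have [x [x0x Px]] := P_unbounded x0; exists x; split=> //.
exact: leq_ltn_trans N_le (countA_ltn (P_A x Px) x0x).
Qed.

Theorem proposition1 :
  SchinzelH ->
  forall N : nat, exists n : nat, (N < n)%N /\ (2 <= n)%N /\
    exists x y : nat, nthA n x /\ nthA n.-1 y /\ ~~ inA (x - y).
Proof.
move=> schinzel N.
have pair M : exists t, M < t /\ inA (130 * t + 66) /\ inA (130 * t + 74).
  by apply: SchinzelH_inA_pair; rewrite ?coprimeMl ?coprimeMr.
pose P x := [/\ inA x, inA (x + 8) & forall k, 0 < k < 8 -> ~~ inA (x + k)].
have [x [[x_A x8_A gap] N_le]] : exists x, P x /\ N <= countA x.
  apply: countA_unbounded => [M | x [] //].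
  have [t [Mt [t_A t8_A]]] := pair M; exists (130 * t + 66); split; first lia.
  by split=> [||k]; [| rewrite -addnA | apply: not_inA_130_66_gap].
have [xd_nth x_nth] := nthA_consecutive (d := 8) x_A isT gap x8_A.
have countA_gt0 : 0 < countA x by apply: (@countA_ltn 0 x x_A); case/andP: x_A.
exists (countA x).+1; split; [lia | split; [lia | exists (x + 8), x]].
by rewrite addKn.
Qed.
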